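(* Let $\boldsymbol\Sigma$ be a positive definite $n\times n$ covariance matrix associated with locations $s_1,\dots,s_n$ (in a fixed order). For $m\ge0$, let $\mathbf Q(m)=(\mathbf I-\mathbf B(m))^\top\mathbf F(m)^{-1}(\mathbf I-\mathbf B(m))$ be the NNGP precision matrix derived from $\boldsymbol\Sigma$ with neighbor sets $N_m(i)$ of size $\min(m,i-1)$ consisting of nearest previous locations, nested in $m$ (i.e. $N_m(i)\subseteq N_{m+1}(i)$). Let $\mathbf E(m)=(\boldsymbol\Sigma^{1/2})^\top\mathbf Q(m)\boldsymbol\Sigma^{1/2}$ and $\mathrm{KLD}(\mathbf I,\mathbf E(m))=\operatorname{tr}(\mathbf E(m))-\log|\mathbf E(m)|$. Then $\mathrm{KLD}(\mathbf I,\mathbf E(m))$ decreases monotonically with $m$.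
   Context: $\boldsymbol\Sigma^{1/2}(\boldsymbol\Sigma^{1/2})^\top=\boldsymbol\Sigma$. NNGP construction with neighbor sets $N(i)\subseteq\{1,\dots,i-1\}$: $\mathbf B$ strictly lower triangular with $\mathbf B_{i,N(i)}=\boldsymbol\Sigma(i,N(i))\boldsymbol\Sigma(N(i),N(i))^{-1}$, zero elsewhere; $\mathbf F$ diagonal with $\mathbf F_{ii}=\boldsymbol\Sigma_{ii}-\boldsymbol\Sigma(i,N(i))\boldsymbol\Sigma(N(i),N(i))^{-1}\boldsymbol\Sigma(N(i),i)$ (with $\mathbf F_{ii}=\boldsymbol\Sigma_{ii}$ if $N(i)=\emptyset$). $m=0$ gives $\mathbf Q(0)$ diagonal. *)

From HB Require Import structures.
From mathcomp Require Import all_boot all_order all_algebra.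
From mathcomp Require Import reals exp.
Set Implicit Arguments. Unset Strict Implicit. Unset Printing Implicit Defensive.
Import Order.TTheory GRing.Theory Num.Theory.
Local Open Scope ring_scope.

Section NNGP.
Variable R : realType.
Variable n : nat.

Definition posdef (S : 'M[R]_n) : Prop :=
  S^T = S /\ forall x : 'cV[R]_n, x != 0 -> 0 < (x^T *m S *m x) 0 0.

(* Selection matrix of an index set A: row a is the unit row e_{enum_val a}.
   P *m S *m P^T = S(A,A), row i S *m P^T = S(i,A). *)
Definition sub_idx (A : {set 'I_n}) : 'M[R]_(#|A|, n) :=
  \matrix_(a, j) (enum_val a == j)%:R.

(* NNGP B: row i is Sigma(i,N(i)) Sigma(N(i),N(i))^{-1} placed on columns N(i), zero elsewhere. *)
Definition nngp_B (S : 'M[R]_n) (N : 'I_n -> {set 'I_n}) : 'M[R]_n :=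
  \matrix_i (row i S *m (sub_idx (N i))^T
             *m invmx (sub_idx (N i) *m S *m (sub_idx (N i))^T) *m sub_idx (N i)).

Definition nngp_F (S : 'M[R]_n) (N : 'I_n -> {set 'I_n}) : 'M[R]_n :=
  diag_mx (\row_i (S i i -
     (row i S *m (sub_idx (N i))^T
        *m invmx (sub_idx (N i) *m S *m (sub_idx (N i))^T)
        *m (row i S *m (sub_idx (N i))^T)^T) 0 0)).

Definition nngp_Q (S : 'M[R]_n) (N : 'I_n -> {set 'I_n}) : 'M[R]_n :=
  (1%:M - nngp_B S N)^T *m invmx (nngp_F S N) *m (1%:M - nngp_B S N).

Definition KLD_I (E : 'M[R]_n) : R := \tr E - ln (\det E).

End NNGP.

Definition eucl_dist (R : realType) (d : nat) (x y : 'rV[R]_d) : R :=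
  Num.sqrt (\sum_(k < d) (x 0 k - y 0 k) ^+ 2).

From HB Require Import structures.
From mathcomp Require Import all_boot all_order all_algebra.
From mathcomp Require Import reals exp.
Set Implicit Arguments. Unset Strict Implicit. Unset Printing Implicit Defensive.
Import Order.TTheory GRing.Theory Num.Theory.
Local Open Scope ring_scope.

(* Row i of I - B is the residual u_i = e_i - w_i P_{N(i)}, where w_i are the
   kriging weights of s_i on its neighbours, and F_ii = u_i Sigma u_i^T is the
   conditional variance of s_i given N(i). As I - B is unit lower triangular,
   tr E = tr (Q Sigma) = sum_i F_ii^-1 F_ii = n and det E = det Sigma / prod_i F_ii,
   so KLD(I, E) = n - ln det Sigma + ln prod_i F_ii.
   The residual is Sigma-orthogonal to the coordinates in N(i), hence minimises
   the quadratic form on e_i + span N(i); so F_ii can only decrease as N(i)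
   grows. *)

Definition qform (R : realType) (n : nat) (S : 'M[R]_n) (u : 'rV[R]_n) : R :=
  (u *m S *m u^T) 0 0.

Lemma invmx_diag (F : fieldType) n (d : 'rV[F]_n) :
  (forall i, d 0 i != 0) -> invmx (diag_mx d) = diag_mx (\row_i (d 0 i)^-1).
Proof.
move=> d_neq0; have d_unit : diag_mx d \in unitmx.
  by rewrite unitmxE det_diag unitfE; apply/prodf_neq0 => i _.
have d_dV : diag_mx d *m diag_mx (\row_i (d 0 i)^-1) = 1%:M.
  apply/matrixP => i j; rewrite mul_diag_mx !mxE.
  by case: eqP => [->|_]; rewrite ?mulr1n ?divff ?mulr0n ?mulr0.
by rewrite -[RHS](mulKmx d_unit) d_dV mulmx1.
Qed.

Section PositiveDefinite.
Variable R : realType.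

Lemma posdef_sym n (S : 'M[R]_n) : posdef S -> S^T = S.
Proof. by case. Qed.

Lemma posdef_qform_gt0 n (S : 'M[R]_n) u : posdef S -> u != 0 -> 0 < qform S u.
Proof.
case=> _ S_pos u_neq0; have := S_pos u^T; rewrite trmxK; apply.
by apply: contra u_neq0 => /eqP/(congr1 trmx); rewrite trmxK trmx0 => ->.
Qed.

Lemma posdef_qform_ge0 n (S : 'M[R]_n) u : posdef S -> 0 <= qform S u.
Proof.
move=> S_pd; have [->|u_neq0] := eqVneq u 0; last exact/ltW/posdef_qform_gt0.
by rewrite /qform !mul0mx mxE.
Qed.

Lemma posdef_unitmx n (S : 'M[R]_n) : posdef S -> S \in unitmx.
Proof.
move=> S_pd; rewrite unitmxE unitfE; apply/negP => /det0P [v v_neq0 vS].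
by have := posdef_qform_gt0 S_pd v_neq0; rewrite /qform vS mul0mx mxE ltxx.
Qed.

Lemma posdef_compress n k (S : 'M[R]_n) (P : 'M[R]_(k, n)) :
  P *m P^T = 1%:M -> posdef S -> posdef (P *m S *m P^T).
Proof.
move=> PPt [S_sym S_pos]; split; first by rewrite !trmx_mul trmxK S_sym mulmxA.
move=> x x_neq0; have Ptx_neq0 : P^T *m x != 0.
  apply: contra x_neq0 => /eqP Ptx0.
  by rewrite -(mul1mx x) -PPt -mulmxA Ptx0 mulmx0.
by move: (S_pos _ Ptx_neq0); rewrite trmx_mul trmxK !mulmxA.
Qed.

Lemma det_mul_tr_gt0 n (A : 'M[R]_n) : A *m A^T \in unitmx -> 0 < \det (A *m A^T).
Proof.
rewrite unitmxE unitfE det_mulmx det_tr => det_neq0.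
by rewrite lt_def det_neq0 -expr2 sqr_ge0.
Qed.

End PositiveDefinite.

Section SubIndex.
Variables (R : realType) (n : nat).
Implicit Types (A : {set 'I_n}).

Local Notation P A := (sub_idx R A).

Lemma sub_idx_subset A A' :
  A \subset A' -> P A *m (P A')^T *m P A' = P A.
Proof.
move=> sAA'; have PPt_ij a (a' : 'I_#|A'|) :
    (P A *m (P A')^T) a a' = (enum_val a == enum_val a')%:R.
  rewrite mxE (bigD1 (enum_val a)) //= big1 => [|j /negbTE ja].
    by rewrite !mxE eqxx mul1r addr0 eq_sym.
  by rewrite !mxE eq_sym ja mul0r.
apply/matrixP => a j.
have a_in : enum_val a \in A' := subsetP sAA' _ (enum_valP a).
rewrite mxE (bigD1 (enum_rank_in a_in (enum_val a))) //= big1 => [|a' a'_neq].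
  by rewrite PPt_ij !mxE enum_rankK_in // eqxx mul1r addr0.
rewrite PPt_ij; case: eqP => [a_a'|]; last by rewrite mul0r.
by case/eqP: a'_neq; apply: enum_val_inj; rewrite enum_rankK_in.
Qed.

Lemma sub_idx_mul_tr A : P A *m (P A)^T = 1%:M.
Proof.
apply/matrixP => a b; rewrite !mxE (bigD1 (enum_val a)) //= big1.
  by rewrite !mxE eqxx mul1r addr0 (inj_eq enum_val_inj) eq_sym.
by move=> j /negbTE ja; rewrite !mxE eq_sym ja mul0r.
Qed.

Lemma mul_sub_idx_out A (x : 'rV[R]_#|A|) j : j \notin A -> (x *m P A) 0 j = 0.
Proof.
move=> jA; rewrite mxE big1 // => a _; rewrite mxE.
by case: eqP => [aj|]; [by rewrite -aj enum_valP in jA | rewrite mulr0].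
Qed.

End SubIndex.

Section ConditionalVariance.
Variables (R : realType) (n : nat) (S : 'M[R]_n).
Implicit Types (A : {set 'I_n}) (i : 'I_n).

Local Notation P A := (sub_idx R A).

Definition kriging_weights A i : 'rV[R]_#|A| :=
  row i S *m (P A)^T *m invmx (P A *m S *m (P A)^T).

Definition resid A i : 'rV[R]_n := delta_mx 0 i - kriging_weights A i *m P A.

Definition cond_var A i : R := qform S (resid A i).

Lemma resid_out A i j : j \notin A -> resid A i 0 j = (i == j)%:R.
Proof.
move=> jA; rewrite mxE [X in _ + X]mxE mul_sub_idx_out // subr0.
by rewrite mxE eqxx eq_sym.
Qed.

Lemma resid_neq0 A i : i \notin A -> resid A i != 0.
Proof.
move=> iA; apply/eqP => /(congr1 (fun u : 'rV_n => u 0 i)).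
by rewrite resid_out // eqxx mxE; apply/eqP; rewrite oner_eq0.
Qed.

Lemma qform_row (M : 'M[R]_n) i : qform S (row i M) = (M *m S *m M^T) i i.
Proof.
have -> : (M *m S *m M^T) i i = row i (M *m S *m M^T) 0 i by rewrite [RHS]mxE.
by rewrite /qform !row_mul !mxE; apply: eq_bigr => k _; rewrite !mxE.
Qed.

Hypothesis S_posdef : posdef S.

Lemma resid_orth A i : resid A i *m S *m (P A)^T = 0.
Proof.
have PSPt_unit := posdef_unitmx (posdef_compress (sub_idx_mul_tr R A) S_posdef).
rewrite /resid /kriging_weights !mulmxBl -rowE -!mulmxA (mulmxA (P A)).
by rewrite mulVmx // mulmx1 subrr.
Qed.

Lemma qform_resid_shift A i w :
  qform S (resid A i - w *m P A) = cond_var A i + qform S (w *m P A).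
Proof.
rewrite /cond_var; have := resid_orth A i; move: (resid A i) => u u_orth.
have orth_l : u *m S *m (w *m P A)^T = 0.
  by rewrite trmx_mul mulmxA u_orth mul0mx.
have orth_r : w *m P A *m S *m u^T = 0.
  apply: trmx_inj; rewrite trmx0 !trmx_mul trmxK (posdef_sym S_posdef).
  by rewrite !mulmxA u_orth mul0mx.
rewrite /qform linearB /= !mulmxBl !mulmxBr orth_l orth_r.
by rewrite subr0 sub0r opprK !mxE.
Qed.

Lemma cond_var_schur A i :
  cond_var A i =
  S i i - (row i S *m (P A)^T *m invmx (P A *m S *m (P A)^T)
             *m (row i S *m (P A)^T)^T) 0 0.
Proof.
have S_sym := posdef_sym S_posdef.
have orth : resid A i *m S *m (kriging_weights A i *m P A)^T = 0.
  by rewrite trmx_mul mulmxA resid_orth mul0mx.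
have cross : kriging_weights A i *m P A *m S *m (delta_mx 0 i)^T
             = kriging_weights A i *m (row i S *m (P A)^T)^T.
  by rewrite trmx_mul trmxK rowE trmx_mul S_sym !mulmxA.
rewrite /cond_var /qform {2}/resid linearB /= mulmxBr orth subr0 mulmxBl mulmxBl.
by rewrite -rowE cross mxE trmx_delta -colE !mxE.
Qed.

Lemma cond_var_gt0 A i : i \notin A -> 0 < cond_var A i.
Proof. by move=> iA; apply/posdef_qform_gt0/resid_neq0. Qed.

Lemma cond_var_subset A A' i : A \subset A' -> cond_var A' i <= cond_var A i.
Proof.
move=> sAA'; set k := kriging_weights A i.
set w := k *m P A *m (P A')^T - kriging_weights A' i.
have resid_A : resid A i = resid A' i - w *m P A'.
  rewrite /resid /w mulmxBl -(mulmxA (k *m P A)) -(mulmxA k) (mulmxA (P A)).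
  by rewrite sub_idx_subset // opprB addrA subrK.
by rewrite {2}/cond_var resid_A qform_resid_shift lerDl posdef_qform_ge0.
Qed.

End ConditionalVariance.

Section NNGP.
Variables (R : realType) (n : nat) (S : 'M[R]_n) (N : 'I_n -> {set 'I_n}).

Lemma row_nngp_IB i : row i (1%:M - nngp_B S N) = resid S (N i) i.
Proof.
apply/rowP => j; rewrite /resid [LHS]mxE [RHS]mxE [in LHS]mxE; congr (_ + _).
  by rewrite !mxE eqxx eq_sym.
by rewrite [LHS]mxE [RHS]mxE /nngp_B mxE.
Qed.

Hypothesis N_causal : forall i, N i \subset [set j : 'I_n | (j < i)%N].

Lemma nngp_nbr_notin (i j : 'I_n) : (i <= j)%N -> j \notin N i.
Proof.
move=> le_ij; apply/negP => /(subsetP (N_causal i)); rewrite inE => lt_ji.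
by have := leq_trans lt_ji le_ij; rewrite ltnn.
Qed.

Lemma det_nngp_IB : \det (1%:M - nngp_B S N) = 1.
Proof.
have IB_ij i j : (1%:M - nngp_B S N) i j = resid S (N i) i 0 j.
  by rewrite -row_nngp_IB [RHS]mxE.
rewrite det_trig; last first.
  apply/is_trig_mxP => i j lt_ij.
  rewrite IB_ij resid_out ?nngp_nbr_notin ?(ltnW lt_ij) //.
  by rewrite (ltn_eqF lt_ij : (i == j) = false).
by rewrite big1 // => i _; rewrite IB_ij resid_out ?nngp_nbr_notin // eqxx.
Qed.

Hypothesis S_posdef : posdef S.

Lemma nngp_cond_var_gt0 i : 0 < cond_var S (N i) i.
Proof. exact/cond_var_gt0/nngp_nbr_notin. Qed.

Lemma nngp_F_cond_var : nngp_F S N = diag_mx (\row_i cond_var S (N i) i).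
Proof.
by congr diag_mx; apply/rowP => i; rewrite [LHS]mxE [RHS]mxE cond_var_schur.
Qed.

Lemma invmx_nngp_F :
  invmx (nngp_F S N) = diag_mx (\row_i (cond_var S (N i) i)^-1).
Proof.
rewrite nngp_F_cond_var invmx_diag => [|i]; last first.
  by rewrite mxE lt0r_neq0 ?nngp_cond_var_gt0.
by congr diag_mx; apply/rowP => i; rewrite !mxE.
Qed.

Variable Sh : 'M[R]_n.
Hypothesis Sh_sqrt : Sh *m Sh^T = S.

Lemma mxtrace_nngp_E : \tr (Sh^T *m nngp_Q S N *m Sh) = n%:R.
Proof.
rewrite mxtrace_mulC mulmxA Sh_sqrt /nngp_Q !mulmxA mxtrace_mulC !mulmxA.
rewrite invmx_nngp_F mul_mx_diag /mxtrace.
under eq_bigr do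
  rewrite mxE -qform_row row_nngp_IB mxE mulfV ?lt0r_neq0 ?nngp_cond_var_gt0 //.
by rewrite sumr_const card_ord.
Qed.

Lemma det_nngp_E :
  \det (Sh^T *m nngp_Q S N *m Sh) = \det S / \prod_i cond_var S (N i) i.
Proof.
have det_S : \det S = \det Sh * \det Sh by rewrite -Sh_sqrt det_mulmx det_tr.
rewrite /nngp_Q !det_mulmx !det_tr det_nngp_IB invmx_nngp_F det_diag det_S.
under eq_bigr do rewrite mxE.
by rewrite prodfV mulr1 mul1r mulrAC.
Qed.

Lemma KLD_nngp_E :
  KLD_I (Sh^T *m nngp_Q S N *m Sh)
  = n%:R - ln (\det S / \prod_i cond_var S (N i) i).
Proof. by rewrite /KLD_I mxtrace_nngp_E det_nngp_E. Qed.

End NNGP.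

Theorem propositionS2 (R : realType) (n d : nat)
  (Sigma : 'M[R]_n) (Shalf : 'M[R]_n) (s : 'I_n -> 'rV[R]_d)
  (N : nat -> 'I_n -> {set 'I_n}) :
  posdef Sigma ->
  Shalf *m Shalf^T = Sigma ->
  (* N_m(i) consists of previous locations *)
  (forall m (i : 'I_n), N m i \subset [set j : 'I_n | (j < i)%N]) ->
  (* |N_m(i)| = min(m, i-1) (0-based index i has i previous locations) *)
  (forall m (i : 'I_n), #|N m i| = minn m i) ->
  (* nearest previous locations *)
  (forall m (i j k : 'I_n), j \in N m i -> (k < i)%N -> k \notin N m i ->
     eucl_dist (s i) (s j) <= eucl_dist (s i) (s k)) ->
  (* nested in m *)
  (forall m (i : 'I_n), N m i \subset N m.+1 i) ->
  forall m : nat,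
    KLD_I (Shalf^T *m nngp_Q Sigma (N m.+1) *m Shalf)
      <= KLD_I (Shalf^T *m nngp_Q Sigma (N m) *m Shalf).
Proof.
move=> Sigma_posdef Shalf_sqrt N_causal _ _ N_nested m.
rewrite !(KLD_nngp_E (N_causal _) Sigma_posdef Shalf_sqrt) lerD2l lerN2.
have det_gt0 : 0 < \det Sigma.
  by rewrite -Shalf_sqrt det_mul_tr_gt0 // Shalf_sqrt posdef_unitmx.
have F_gt0 k i : 0 < cond_var Sigma (N k i) i.
  exact: nngp_cond_var_gt0 (N_causal k) Sigma_posdef i.
have prod_gt0 k : 0 < \prod_i cond_var Sigma (N k i) i.
  by apply: prodr_gt0 => i _; apply: F_gt0.
rewrite ler_ln ?posrE ?divr_gt0 // ler_pM2l // lef_pV2 ?posrE //.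
apply: ler_prod => i _; rewrite ltW //=.
exact: cond_var_subset Sigma_posdef _ _ _ (N_nested m i).
Qed.
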